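(* Let $X$ be a finite, connected, vertex-transitive graph with vertex set $V$, $|V|=n$, equipped with the graph (shortest-path) distance $d$, and let $D$ be its diameter. Let $A=\frac{1}{n^2}\sum_{x,y\in V} d(x,y)$ (sum over all ordered pairs, including $x=y$). Then $$\frac{D}{2}\le A\le \Big(1-\frac1n\Big)D.$$ Moreover, if $n\ge 2$ and $\bar A=\frac{1}{n(n-1)}\sum_{x\neq y} d(x,y)$ (sum over ordered pairs of distinct vertices), then $$\frac{D}{2}\cdot\frac{n}{n-1}\le \bar A\le D.$$
   Context: A graph is vertex-transitive if its automorphism group acts transitively on its vertices. *)

From HB Require Import structures.
From mathcomp Require Import all_boot all_order all_algebra all_fingroup.
Set Implicit Arguments. Unset Strict Implicit. Unset Printing Implicit Defensive.

Definition simple_graph (T : finType) (e : rel T) : Prop :=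
  symmetric e /\ irreflexive e.

Definition connected_graph (T : finType) (e : rel T) : Prop :=
  forall x y : T, connect e x y.

Definition vertex_transitive (T : finType) (e : rel T) : Prop :=
  forall x y : T, exists f : {perm T},
    (forall a b : T, e (f a) (f b) = e a b) /\ f x = y.

Definition walk_of_len (T : finType) (e : rel T) (k : nat) (x y : T) : bool :=
  [exists p : k.-tuple T, path e x p && (last x p == y)].

(* Shortest-path distance: the least k with a walk of length k from x to y.
   In a connected graph this is always < #|T|; for unreachable pairs
   the value is #|T| (irrelevant under connectivity). *)
Definition gdist (T : finType) (e : rel T) (x y : T) : nat :=
  find (fun k => walk_of_len e k x y) (iota 0 #|T|).

Definition diameter (T : finType) (e : rel T) : nat :=
  \max_(x : T) \max_(y : T) gdist e x y.

Local Open Scope ring_scope.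

Definition avg_dist (T : finType) (e : rel T) : rat :=
  (\sum_(x : T) \sum_(y : T) gdist e x y)%N%:R / (#|T| ^ 2)%N%:R.

Definition avg_dist_distinct (T : finType) (e : rel T) : rat :=
  (\sum_(x : T) \sum_(y : T | y != x) gdist e x y)%N%:R
    / (#|T| * (#|T| - 1))%N%:R.

From HB Require Import structures.
From mathcomp Require Import all_boot all_order all_algebra all_fingroup.
From mathcomp Require Import ring.
Import Order.TTheory GRing.Theory Num.Theory.

Set Implicit Arguments.
Unset Strict Implicit.
Unset Printing Implicit Defensive.

(* The upper bound holds in every graph: a row sum of the distance matrix has
   n - 1 off-diagonal terms, each at most D.  For the lower bound pick u, v
   with d(u, v) = D; summing the triangle inequality D <= d(u, y) + d(y, v)
   over y bounds n D by the row sum at u plus the column sum at v, and by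
   vertex-transitivity every row and column sum equals n A. *)

Section ShortestPaths.
Variables (T : finType) (e : rel T).

Lemma walk_of_lenP k x y :
  reflect (exists p : seq T, [/\ size p = k, path e x p & last x p = y])
          (walk_of_len e k x y).
Proof.
apply: (iffP existsP) => [[p /andP[ep /eqP <-]] | [p [<- ep lp]]].
  by exists (val p); rewrite size_tuple.
by exists (in_tuple p); rewrite /= ep lp eqxx.
Qed.

Lemma gdist_le_walk k x y : walk_of_len e k x y -> (gdist e x y <= k)%N.
Proof.
move=> w; have [lt_k_T | le_T_k] := ltnP k #|T|.
  rewrite leqNgt; apply/negP => /(before_find 0).
  by rewrite nth_iota // add0n w.
apply: leq_trans le_T_k; apply: leq_trans (find_size _ _) _.
by rewrite size_iota.
Qed.

Lemma gdist0 x : gdist e x x = 0%N.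
Proof. by apply/eqP; rewrite -leqn0 gdist_le_walk //; apply/walk_of_lenP; exists [::]. Qed.

(* A shortest path is duplicate-free, so its length is below #|T| and the
   search range [iota 0 #|T|] of [gdist] contains it. *)
Lemma gdist_walk x y : connect e x y -> walk_of_len e (gdist e x y) x y.
Proof.
move=> /connectP[p ep ->]; case: (shortenP ep) => q eq uq _.
have size_q : (size q < #|T|)%N.
  by have := max_card (mem (x :: q)); rewrite (card_uniqP uq).
have has_walk : has (fun k => walk_of_len e k x (last x q)) (iota 0 #|T|).
  apply/hasP; exists (size q); first by rewrite mem_iota add0n size_q.
  by apply/walk_of_lenP; exists q.
have := nth_find 0 has_walk; rewrite nth_iota ?add0n //.
by move: has_walk; rewrite has_find size_iota.
Qed.

Lemma gdist_triangle x y z :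
  connect e x y -> connect e y z -> (gdist e x z <= gdist e x y + gdist e y z)%N.
Proof.
move=> /gdist_walk/walk_of_lenP[p [<- ep <-]] /gdist_walk/walk_of_lenP[q [<- eq <-]].
apply: gdist_le_walk; apply/walk_of_lenP; exists (p ++ q).
by rewrite size_cat cat_path last_cat ep eq.
Qed.

Definition edge_preserving (f : {perm T}) : Prop :=
  forall a b, e (f a) (f b) = e a b.

Lemma edge_preservingV f : edge_preserving f -> edge_preserving f^-1%g.
Proof. by move=> ef a b; rewrite -ef !permKV. Qed.

Lemma walk_of_len_perm f k x y : edge_preserving f ->
  walk_of_len e k x y -> walk_of_len e k (f x) (f y).
Proof.
move=> ef /walk_of_lenP[p [<- ep <-]]; apply/walk_of_lenP; exists (map f p).
by rewrite size_map last_map path_map (eq_path (e' := e)).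
Qed.

Lemma gdist_perm f x y : edge_preserving f -> gdist e (f x) (f y) = gdist e x y.
Proof.
move=> ef; apply: eq_find => k; apply/idP/idP; last exact: walk_of_len_perm.
by move/(walk_of_len_perm (edge_preservingV ef)); rewrite !permK.
Qed.

Lemma gdist_le_diameter x y : (gdist e x y <= diameter e)%N.
Proof.
apply: leq_trans (leq_bigmax x).
exact: (leq_bigmax (F := fun y => gdist e x y)).
Qed.

Lemma diameter_gdist : (0 < #|T|)%N -> exists u v, diameter e = gdist e u v.
Proof.
move=> /card_gt0P[x0 _]; rewrite /diameter (bigop.bigmax_eq_arg x0) //.
by rewrite (bigop.bigmax_eq_arg x0) //; do 2 eexists.
Qed.

Lemma sum_gdist_offdiag :
  (\sum_x \sum_(y | y != x) gdist e x y = \sum_x \sum_y gdist e x y)%N.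
Proof. by apply: eq_bigr => x _; rewrite [RHS](bigD1 x) //= gdist0. Qed.

Lemma sum_gdist_row_le x : (\sum_y gdist e x y <= (#|T| - 1) * diameter e)%N.
Proof.
rewrite (bigD1 x) //= gdist0 add0n subn1 -(cardC1 x) -sum_nat_const.
by apply: leq_sum => y _; apply: gdist_le_diameter.
Qed.

Lemma sum_gdist_le_diameter :
  (\sum_x \sum_y gdist e x y <= #|T| * ((#|T| - 1) * diameter e))%N.
Proof. by rewrite -sum_nat_const; apply: leq_sum => x _; apply: sum_gdist_row_le. Qed.

Hypothesis e_connected : connected_graph e.

Lemma card_mul_gdist_le_sum_gdist u v :
  (#|T| * gdist e u v <= \sum_y gdist e u y + \sum_y gdist e y v)%N.
Proof.
rewrite -big_split -sum_nat_const; apply: leq_sum => y _.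
exact: gdist_triangle.
Qed.

Hypothesis e_transitive : vertex_transitive e.

Lemma sum_gdist_row x : (\sum_x' \sum_y gdist e x' y = #|T| * \sum_y gdist e x y)%N.
Proof.
rewrite -sum_nat_const; apply: eq_bigr => x' _.
have [f [ef <-]] := e_transitive x x'.
by rewrite (reindex_inj (@perm_inj _ f)); apply: eq_bigr => y _; rewrite gdist_perm.
Qed.

Lemma sum_gdist_col y : (\sum_x \sum_y' gdist e x y' = #|T| * \sum_x gdist e x y)%N.
Proof.
rewrite exchange_big -sum_nat_const; apply: eq_bigr => y' _.
have [f [ef <-]] := e_transitive y y'.
by rewrite (reindex_inj (@perm_inj _ f)); apply: eq_bigr => x _; rewrite gdist_perm.
Qed.

Lemma sum_gdist_ge_diameter : (0 < #|T|)%N ->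
  (#|T| * (#|T| * diameter e) <= 2 * \sum_x \sum_y gdist e x y)%N.
Proof.
move=> /diameter_gdist[u [v ->]].
rewrite mul2n -addnn {1}(sum_gdist_row u) (sum_gdist_col v) -mulnDr leq_mul2l.
by rewrite card_mul_gdist_le_sum_gdist orbT.
Qed.

End ShortestPaths.

Local Open Scope ring_scope.

Section AverageBounds.
Variables (R : realFieldType) (n D t : R).
Hypotheses (lower : n * (n * D) <= 2 * t) (upper : t <= n * ((n - 1) * D)).

Lemma mean_bounds : 0 < n -> D / 2 <= t / n ^+ 2 /\ t / n ^+ 2 <= (1 - n^-1) * D.
Proof.
move=> n_gt0; have n2_gt0 : 0 < n ^+ 2 by rewrite exprn_gt0.
rewrite ler_pdivlMr // ler_pdivrMr //; split.
  suff -> : D / 2 * n ^+ 2 = n * (n * D) / 2 by rewrite ler_pdivrMr // [t * _]mulrC.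
  by field.
suff -> : (1 - n^-1) * D * n ^+ 2 = n * ((n - 1) * D) by [].
by field; rewrite gt_eqF.
Qed.

Lemma mean_offdiag_bounds : 1 < n ->
  D / 2 * (n / (n - 1)) <= t / (n * (n - 1)) /\ t / (n * (n - 1)) <= D.
Proof.
move=> n_gt1; have nn1_gt0 : 0 < n * (n - 1).
  by rewrite mulr_gt0 ?subr_gt0 // (lt_trans ltr01).
rewrite ler_pdivlMr // ler_pdivrMr //; split; last by rewrite mulrC -mulrA.
suff -> : D / 2 * (n / (n - 1)) * (n * (n - 1)) = n * (n * D) / 2.
  by rewrite ler_pdivrMr // [t * _]mulrC.
by field; rewrite gt_eqF ?subr_gt0.
Qed.

End AverageBounds.

Theorem theorem1p1 (T : finType) (e : rel T)
  (Hsimple : simple_graph e) (Hne : (0 < #|T|)%N)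
  (Hconn : connected_graph e) (Hvt : vertex_transitive e) :
  let n : rat := (#|T|)%:R in
  let D : rat := (diameter e)%:R in
  (D / 2 <= avg_dist e /\ avg_dist e <= (1 - n^-1) * D) /\
  ((1 < #|T|)%N ->
     D / 2 * (n / (n - 1)) <= avg_dist_distinct e /\ avg_dist_distinct e <= D).
Proof.
move=> n D; rewrite /avg_dist /avg_dist_distinct sum_gdist_offdiag.
set t : rat := (\sum_x \sum_y gdist e x y)%N%:R.
have lower : n * (n * D) <= 2 * t.
  by rewrite -!natrM ler_nat sum_gdist_ge_diameter.
have upper : t <= n * ((n - 1) * D).
  by have := sum_gdist_le_diameter e; rewrite -(ler_nat rat) !natrM natrB.
split; first by rewrite natrX; apply: mean_bounds; rewrite // ltr0n.
move=> n_gt1; rewrite natrM natrB 1?ltnW // -/n.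
by apply: mean_offdiag_bounds; rewrite // ltr1n.
Qed.
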